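(* Let $\mathfrak P$ be a prime ideal of $\mathcal O$ over $\mathfrak p$, $f_\mathfrak P\in\hat A_\mathfrak p[x]$ the corresponding monic irreducible factor of $f$, $n_\mathfrak P=\deg f_\mathfrak P$, and $\theta_\mathfrak P$ a root of $f_\mathfrak P$ in an algebraic closure $\overline{K}_\mathfrak p$. Let $0\le i<j<n_\mathfrak P$ and let $g_i,g_j\in\hat A_\mathfrak p[x]$ be divisor polynomials of $f_\mathfrak P$ of degrees $i$ and $j$ respectively. Then $$\hat v(g_j(\theta_\mathfrak P))\ \ge\ \hat v(g_i(\theta_\mathfrak P)).$$
   Context: Let $A$ be a Dedekind domain with fraction field $K$, $\mathfrak p$ a nonzero prime ideal of $A$ with discrete valuation $v_\mathfrak p$, $K_\mathfrak p$ the completion of $K$ at $\mathfrak p$, $\hat A_\mathfrak p$ its valuation ring, and $\hat v$ the unique extension of $v_\mathfrak p$ to an algebraic closure $\overline K_\mathfrak p$. Let $f\in A[x]$ be monic, irreducible and separable, $\theta$ a root of $f$, $L=K(\theta)$ and $\mathcal O$ the integral closure of $A$ in $L$. The prime ideals $\mathfrak P$ of $\mathcal O$ over $\mathfrak p$ correspond bijectively to the monic irreducible factors $f_\mathfrak P$ of $f$ in $\hat A_\mathfrak p[x]$. For $g=\sum c_kx^k\in K_\mathfrak p[x]$ put $v_0(g)=\min_k v_\mathfrak p(c_k)$. For $0\le m<n_\mathfrak P$, a divisor polynomial of degree $m$ of $f_\mathfrak P$ is a monic $g_m\in\hat A_\mathfrak p[x]$ of degree $m$ such that $\hat v(g_m(\theta_\mathfrak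 P))\ge \hat v(g(\theta_\mathfrak P))-v_0(g)$ for every $g\in\hat A_\mathfrak p[x]$ of degree $m$ (this condition does not depend on the choice of the root $\theta_\mathfrak P$). *)

From HB Require Import structures.
From mathcomp Require Import all_boot all_order all_algebra.
Set Implicit Arguments. Unset Strict Implicit. Unset Printing Implicit Defensive.
Import Order.TTheory GRing.Theory Num.Theory.
Local Open Scope ring_scope.

(* A valuation v : F -> G on a field; the value at 0 (= +oo) is not modelled,
   all axioms concern nonzero elements only. *)
Definition is_valuation (F : fieldType) (G : realDomainType) (v : F -> G) : Prop :=
  (forall x y : F, x != 0 -> y != 0 -> v (x * y) = v x + v y) /\
  (forall x y : F, x != 0 -> y != 0 -> x + y != 0 ->
       Num.min (v x) (v y) <= v (x + y)).

Definition is_discrete_valuation (F : fieldType) (v : F -> int) : Prop :=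
  is_valuation v /\ exists pi : F, pi != 0 /\ v pi = 1.

(* v(x) >= N, with v(0) = +oo *)
Definition vge (F : fieldType) (v : F -> int) (x : F) (N : int) : Prop :=
  x = 0 \/ N <= v x.

Definition v_cauchy (F : fieldType) (v : F -> int) (a : nat -> F) : Prop :=
  forall N : int, exists M : nat, forall m n : nat,
    (M <= m)%N -> (M <= n)%N -> vge v (a m - a n) N.

Definition v_converges (F : fieldType) (v : F -> int) (a : nat -> F) (l : F) : Prop :=
  forall N : int, exists M : nat, forall m : nat, (M <= m)%N -> vge v (a m - l) N.

Definition v_complete (F : fieldType) (v : F -> int) : Prop :=
  forall a : nat -> F, v_cauchy v a -> exists l, v_converges v a l.

Definition algebraic_over (Kp : fieldType) (Kbar : fieldType)
  (iota : {rmorphism Kp -> Kbar}) : Prop :=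
  forall z : Kbar, exists p : {poly Kp}, p != 0 /\ root (map_poly iota p) z.

(* membership in \hat A_p[x]: all coefficients in the valuation ring *)
Definition integral_poly (Kp : fieldType) (v : Kp -> int) (p : {poly Kp}) : Prop :=
  forall i : nat, vge v p`_i 0.

Definition unit_intpoly (Kp : fieldType) (v : Kp -> int) (p : {poly Kp}) : Prop :=
  integral_poly v p /\ exists q, integral_poly v q /\ p * q = 1.

Definition irreducible_intpoly (Kp : fieldType) (v : Kp -> int) (p : {poly Kp}) : Prop :=
  [/\ integral_poly v p, p != 0, ~ unit_intpoly v p &
      forall g h, integral_poly v g -> integral_poly v h -> p = g * h ->
        unit_intpoly v g \/ unit_intpoly v h].

Definition v0 (Kp : fieldType) (v : Kp -> int) (g : {poly Kp}) : int :=
  let s := [seq v c | c <- polyseq g & c != 0] in foldr Num.min (head 0 s) s.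

Definition divisor_poly (Kp : fieldType) (v : Kp -> int) (Kbar : fieldType)
  (iota : {rmorphism Kp -> Kbar}) (vhat : Kbar -> rat) (theta : Kbar)
  (m : nat) (gm : {poly Kp}) : Prop :=
  [/\ gm \is monic, integral_poly v gm, size gm = m.+1 &
      forall g : {poly Kp}, integral_poly v g -> size g = m.+1 ->
        vhat (map_poly iota g).[theta] - (v0 v g)%:~R
          <= vhat (map_poly iota gm).[theta]].

From Pilot Require Import Defs.
From HB Require Import structures.
From mathcomp Require Import all_boot all_order all_algebra.
From mathcomp Require Import lra.
Import Defs.
Import Order.TTheory GRing.Theory Num.Theory.
Set Implicit Arguments. Unset Strict Implicit.
Local Open Scope ring_scope.

(* The polynomial g_i X^(j-i) is monic of degree j with integral coefficients,
   hence v_0 of it is at most 0 and the defining property of the divisor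
   polynomial g_j bounds its value at theta by v(g_j(theta)).  That value is
   g_i(theta) theta^(j-i), and theta is integral (a root of the monic integral
   f_P), so its valuation is at least v(g_i(theta)).  When theta = 0 the
   competitor g_i (X^(j-i) + 1) takes the value g_i(theta) instead. *)

Section Valuation.

Variables (F : fieldType) (G : realDomainType) (w : F -> G).
Hypothesis hw : is_valuation w.

Lemma valuation1 : w 1 = 0.
Proof.
apply: (addrI (w 1)); rewrite addr0.
by rewrite -(proj1 hw) ?mulr1 ?oner_neq0.
Qed.

Lemma valuationN x : x != 0 -> w (- x) = w x.
Proof.
move=> x0; have N1 : (-1 : F) != 0 by rewrite oppr_eq0 oner_neq0.
have wN1 : w (-1) = 0.
  have := proj1 hw _ _ N1 N1; rewrite mulrNN mulr1 valuation1 => /esym/eqP.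
  by rewrite -mulr2n mulrn_eq0 => /eqP.
by rewrite -mulN1r (proj1 hw) // wN1 add0r.
Qed.

Lemma valuationX x n : x != 0 -> w (x ^+ n) = w x *+ n.
Proof.
move=> x0; elim: n => [|n IHn]; first by rewrite expr0 mulr0n valuation1.
by rewrite exprS (proj1 hw) ?expf_neq0 // IHn mulrS.
Qed.

Lemma valuationD_ge (N : G) x y :
  x = 0 \/ N <= w x -> y = 0 \/ N <= w y -> x + y = 0 \/ N <= w (x + y).
Proof.
case=> [->|wx]; first by rewrite add0r.
case=> [->|wy]; first by rewrite addr0; right.
have [->|xy0] := eqVneq (x + y) 0; first by left.
have [->|x0] := eqVneq x 0; first by rewrite add0r; right.
have [->|y0] := eqVneq y 0; first by rewrite addr0; right.
by right; apply: le_trans (proj2 hw x y x0 y0 xy0); rewrite le_min wx wy.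
Qed.

Lemma valuation_sum_ge (N : G) (I : Type) (r : seq I) (P : pred I)
    (f : I -> F) :
  (forall i, P i -> f i = 0 \/ N <= w (f i)) ->
  \sum_(i <- r | P i) f i = 0 \/ N <= w (\sum_(i <- r | P i) f i).
Proof.
move=> wf; apply: (big_ind (fun x => x = 0 \/ N <= w x)) => //; first by left.
exact: valuationD_ge.
Qed.

Lemma addr_neq0_valuation_lt x y : x != 0 -> y = 0 \/ w x < w y -> x + y != 0.
Proof.
move=> x0 [->|wxy]; first by rewrite addr0.
apply: contraTneq wxy => /eqP; rewrite addrC addr_eq0 => /eqP ->.
by rewrite valuationN // ltxx.
Qed.

End Valuation.

Section IntegralRoot.

Variables (Kp : fieldType) (v : Kp -> int) (Kbar : fieldType).
Variables (iota : {rmorphism Kp -> Kbar}) (vhat : Kbar -> rat).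
Hypothesis hvhat : is_valuation vhat.
Hypothesis hext : forall a : Kp, a != 0 -> vhat (iota a) = (v a)%:~R.

(* If vhat theta < 0, the leading term theta^n of f(theta) strictly dominates
   all the others, so f(theta) cannot vanish. *)
Lemma root_monic_integral_valuation_ge0 (f : {poly Kp}) (theta : Kbar) :
  f \is monic -> integral_poly v f -> root (map_poly iota f) theta ->
  theta != 0 -> 0 <= vhat theta.
Proof.
move=> mon_f int_f f_theta theta0; rewrite leNgt; apply/negP => vt_lt0.
have f0 : map_poly iota f != 0 by rewrite map_poly_eq0 monic_neq0.
set n := (size f).-1.
have size_f : size f = n.+1 by rewrite prednK // size_poly_gt0 monic_neq0.
have n_gt0 : (0 < n)%N.
  by have := root_size_gt1 f0 f_theta; rewrite size_map_poly size_f.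
have lead : (map_poly iota f)`_n = 1.
  by rewrite coef_map /n -lead_coefE (monicP mon_f); apply: rmorph1.
move: f_theta; rewrite /root horner_coef size_map_poly size_f big_ord_recr /=.
rewrite lead mul1r.
set S := \sum_(_ < _) _; rewrite addrC; apply/negP.
apply: (addr_neq0_valuation_lt hvhat); first by rewrite expf_neq0.
have: S = 0 \/ vhat theta *+ n.-1 <= vhat S.
  apply: (valuation_sum_ge hvhat) => k _; rewrite coef_map.
  have [->|ak0] := eqVneq f`_k 0; first by left; rewrite raddf0 mul0r.
  have vak : 0 <= v f`_k by case: (int_f k) => // ak; rewrite ak eqxx in ak0.
  right.
  rewrite (proj1 hvhat) ?fmorph_eq0 ?expf_neq0 // hext // valuationX //.
  have: vhat theta *+ n.-1 <= vhat theta *+ k.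
    by apply: ler_wnMn2l; [exact: ltW | rewrite -ltnS prednK].
  by rewrite -(ler0z rat) in vak; lra.
case=> [|vS]; [by left | right; rewrite valuationX //].
by rewrite -(prednK n_gt0) mulrS; lra.
Qed.

End IntegralRoot.

Lemma v0_monic_le0 (Kp : fieldType) (v : Kp -> int) (g : {poly Kp}) :
  v 1 = 0 -> g \is monic -> v0 v g <= 0.
Proof.
move=> v1 /monicP lead_g; rewrite /v0.
set s := map _ _; have: 0 \in s.
  rewrite -v1; apply: map_f; rewrite mem_filter oner_neq0 /= -lead_g lead_coefE.
  by rewrite mem_nth // prednK // size_poly_gt0 -lead_coef_eq0 lead_g oner_neq0.
elim: s (head 0 s) => //= a s IHs d; rewrite in_cons ge_min.
by case/orP=> [/eqP <-|/IHs ->]; rewrite ?lexx ?orbT.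
Qed.

Lemma divisor_poly_max (Kp : fieldType) (v : Kp -> int) (Kbar : fieldType)
    (iota : {rmorphism Kp -> Kbar}) (vhat : Kbar -> rat) (theta : Kbar)
    (m : nat) (gm g : {poly Kp}) :
  v 1 = 0 -> divisor_poly v iota vhat theta m gm ->
  g \is monic -> integral_poly v g -> size g = m.+1 ->
  vhat (map_poly iota g).[theta] <= vhat (map_poly iota gm).[theta].
Proof.
move=> v1 [_ _ _ max_gm] mon_g int_g size_g.
have := max_gm g int_g size_g.
have : (v0 v g)%:~R <= 0 :> rat by rewrite lerz0 v0_monic_le0.
lra.
Qed.

Lemma integral_polyD (Kp : fieldType) (v : Kp -> int) (p q : {poly Kp}) :
  is_valuation v -> integral_poly v p -> integral_poly v q ->
  integral_poly v (p + q).
Proof.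
move=> hv int_p int_q k; rewrite coefD.
by apply: (valuationD_ge hv); [exact: int_p | exact: int_q].
Qed.

Lemma integral_polyMXn (Kp : fieldType) (v : Kp -> int) (p : {poly Kp}) k :
  integral_poly v p -> integral_poly v (p * 'X^k).
Proof.
by move=> int_p n; rewrite coefMXn; case: ifP => _; [left | exact: int_p].
Qed.

Theorem mainTheorem1
  (Kp : fieldType) (v : Kp -> int)
  (hv : is_discrete_valuation v) (hcomp : v_complete v)
  (Kbar : closedFieldType) (iota : {rmorphism Kp -> Kbar})
  (halg : algebraic_over iota)
  (vhat : Kbar -> rat) (hvhat : is_valuation vhat)
  (hext : forall a : Kp, a != 0 -> vhat (iota a) = (v a)%:~R)
  (fP : {poly Kp}) (hmon : fP \is monic) (hirr : irreducible_intpoly v fP)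
  (theta : Kbar) (hroot : root (map_poly iota fP) theta)
  (i j : nat) (hij : (i < j)%N) (hjn : (j < (size fP).-1)%N)
  (gi gj : {poly Kp})
  (hgi : divisor_poly v iota vhat theta i gi)
  (hgj : divisor_poly v iota vhat theta j gj) :
  vhat (map_poly iota gi).[theta] <= vhat (map_poly iota gj).[theta].
Proof.
have [hval _] := hv; have v1 := valuation1 hval.
have [mon_gi int_gi size_gi _] := hgi; have [int_fP _ _ _] := hirr.
set k := (j - i)%N; have k_gt0 : (0 < k)%N by rewrite subn_gt0.
set g := gi * 'X^k.
have size_g : size g = j.+1.
  by rewrite size_mulXn ?monic_neq0 // size_gi addnS subnK // ltnW.
have mon_g : g \is monic by rewrite monicMr ?monicXn.
have int_g : integral_poly v g by apply: integral_polyMXn.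
have [theta0|theta0] := eqVneq theta 0.
  have size_gi_lt : (size gi < size g)%N by rewrite size_g size_gi ltnS.
  have := divisor_poly_max (g := g + gi) v1 hgj.
  rewrite !rmorphD rmorphM /= map_polyXn hornerD hornerM hornerXn theta0.
  rewrite expr0n gtn_eqF // mulr0 add0r; apply.
  - by rewrite monicE lead_coefDl // -monicE.
  - exact: integral_polyD.
  - by rewrite size_polyDl.
have := divisor_poly_max v1 hgj mon_g int_g size_g.
rewrite rmorphM /= map_polyXn hornerM hornerXn.
(* vhat 0 is a junk value, but then the bound for g is literally the goal. *)
have [->|gi_theta0] := eqVneq (map_poly iota gi).[theta] 0.
  by rewrite mul0r.
rewrite (proj1 hvhat) ?expf_neq0 // valuationX //.
have : 0 <= vhat theta *+ k.
  by rewrite mulrn_wge0 // (root_monic_integral_valuation_ge0 hvhat hext hmon).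
lra.
Qed.
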